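(* Every infinite set $X\subseteq\omega$ has an infinite subset $B$ such that for all infinite $C, D\subseteq B$ there is no Turing functional $\Phi$ with $\Phi(S) = C$ for every infinite $S\subseteq D$. *)

(* Computability relative to an oracle, via oracle partial
   mu-recursive functions (Kleene). Subsets of omega are represented by their
   characteristic functions nat -> bool. *)
From Stdlib Require Import List Arith.
Import ListNotations.

Inductive prf : Type :=
| PZero : prf
| PSucc : prf
| PProj : nat -> prf
| POracle : prf
| PComp : prf -> list prf -> prf
| PRec : prf -> prf -> prf
| PMin : prf -> prf.

Inductive eval (A : nat -> bool) : prf -> list nat -> nat -> Prop :=
| e_zero args : eval A PZero args 0
| e_succ args : eval A PSucc args (S (hd 0 args))
| e_proj i args : eval A (PProj i) args (nth i args 0)
| e_oracle args : eval A POracle args (if A (hd 0 args) then 1 else 0)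
| e_comp f gs args vs v :
    evals A gs args vs -> eval A f vs v -> eval A (PComp f gs) args v
| e_rec0 f g ys v : eval A f ys v -> eval A (PRec f g) (0 :: ys) v
| e_recS f g k ys r v :
    eval A (PRec f g) (k :: ys) r -> eval A g (k :: r :: ys) v ->
    eval A (PRec f g) (S k :: ys) v
| e_min f args x :
    eval A f (x :: args) 0 ->
    (forall y, y < x -> exists v, eval A f (y :: args) (S v)) ->
    eval A (PMin f) args x
with evals (A : nat -> bool) : list prf -> list nat -> list nat -> Prop :=
| es_nil args : evals A [] args []
| es_cons g gs args v vs :
    eval A g args v -> evals A gs args vs -> evals A (g :: gs) args (v :: vs).

Definition functional_computes (e : prf) (S C : nat -> bool) : Prop :=
  forall n, eval S e [n] (if C n then 1 else 0).

Definition infinite (X : nat -> bool) : Prop :=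
  forall n, exists m, n <= m /\ X m = true.

Definition subset (Y X : nat -> bool) : Prop :=
  forall n, Y n = true -> X n = true.

From Stdlib Require Import List Arith Lia Bool Classical ClassicalEpsilon.
From Stdlib Require Cantor.
Import ListNotations.

(* Say that an infinite D separates a from y for a code e when e outputs 1 on
   a and 0 on y from every infinite oracle contained in D, and that a beats y
   below R when no infinite subset of R separates a from y.  By determinism no
   infinite set separates both a from y and y from a, so every infinite R can
   be shrunk until a beats y or y beats a; finitely many shrinkings decide the
   tournaments among k+2 candidates for all the codes e_0, ..., e_k at once.
   In each tournament at most one candidate beats nobody, so some candidate b_k
   beats, for every j <= k, a rival that is then discarded.  Now
   B = {b_0 < b_1 < ...} works: if e_j computed C from all infinite subsets of
   D, take b_k in C with k >= j; its rival y for e_j lies outside B, hence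
   outside C, and the elements of D chosen after stage k would separate b_k
   from y for e_j. *)

Lemma subset_refl A : subset A A.
Proof. now intros n. Qed.

Lemma subset_trans A B C : subset A B -> subset B C -> subset A C.
Proof. intros HAB HBC n Hn. exact (HBC n (HAB n Hn)). Qed.

Lemma infinite_andb D E M : infinite D ->
  (forall n, D n = true -> M < n -> E n = true) -> infinite (fun n => D n && E n).
Proof.
  intros HD HE n. destruct (HD (n + S M)) as [m [Hm HDm]].
  exists m. split; [lia|]. rewrite HDm. apply HE; [exact HDm | lia].
Qed.

(* Structural recursion on the first derivation: in the [PMin] case the competing
   derivation of a smaller search value is a subterm, which an induction
   principle would not provide. *)
Fixpoint eval_deterministic A e args v (H : eval A e args v) {struct H} :
  forall v', eval A e args v' -> v = v'
with evals_deterministic A gs args vs (H : evals A gs args vs) {struct H} :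
  forall vs', evals A gs args vs' -> vs = vs'.
Proof.
  - destruct H as [| | | | f gs args ws v Hgs Hf | f g ys v Hf | f g k ys r v Hk Hg
                  | f args x Hx Hbelow];
      intros v' H'; inversion H'; subst; try reflexivity.
    + match goal with Hgs' : evals _ _ _ ?ws', Hf' : eval _ _ ?ws' _ |- _ =>
        apply (evals_deterministic _ _ _ _ Hgs) in Hgs'; subst;
        exact (eval_deterministic _ _ _ _ Hf _ Hf') end.
    + match goal with Hf' : eval _ f _ _ |- _ => exact (eval_deterministic _ _ _ _ Hf _ Hf') end.
    + match goal with Hk' : eval _ (PRec _ _) _ ?r', Hg' : eval _ g (_ :: ?r' :: _) _ |- _ =>
        apply (eval_deterministic _ _ _ _ Hk) in Hk'; subst;
        exact (eval_deterministic _ _ _ _ Hg _ Hg') end.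
    + match goal with Hx' : eval _ f (v' :: _) 0, Hbelow' : forall y, y < v' -> _ |- _ =>
        destruct (lt_eq_lt_dec x v') as [[Hlt | Heq] | Hlt]; [| exact Heq |];
        [ destruct (Hbelow' x Hlt) as [w Hw]; apply (eval_deterministic _ _ _ _ Hx) in Hw
        | destruct (Hbelow v' Hlt) as [w Hw]; apply (eval_deterministic _ _ _ _ Hw) in Hx' ];
        discriminate end.
  - destruct H as [| g gs args v vs Hg Hgs]; intros vs' H'; inversion H'; subst; [reflexivity|].
    match goal with Hg' : eval _ g _ _, Hgs' : evals _ gs _ _ |- _ =>
      f_equal; [exact (eval_deterministic _ _ _ _ Hg _ Hg') | exact (evals_deterministic _ _ _ _ Hgs _ Hgs')] end.
Qed.

Definition cantor_pair (a b : nat) : nat := Cantor.to_nat (a, b).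
Arguments cantor_pair : simpl never.

Lemma cantor_pair_inj a b c d : cantor_pair a b = cantor_pair c d -> a = c /\ b = d.
Proof.
  intro H. apply (f_equal Cantor.of_nat) in H.
  unfold cantor_pair in H. rewrite !Cantor.cancel_of_to in H. now injection H.
Qed.

Fixpoint prf_code (e : prf) : nat :=
  match e with
  | PZero => cantor_pair 0 0
  | PSucc => cantor_pair 1 0
  | PProj i => cantor_pair 2 i
  | POracle => cantor_pair 3 0
  | PComp f gs =>
      cantor_pair 4 (cantor_pair (prf_code f)
        ((fix list_code (l : list prf) : nat :=
            match l with
            | [] => 0
            | g :: l' => S (cantor_pair (prf_code g) (list_code l'))
            end) gs))
  | PRec f g => cantor_pair 5 (cantor_pair (prf_code f) (prf_code g))
  | PMin f => cantor_pair 6 (prf_code f)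
  end.

Fixpoint prf_code_inj (e : prf) {struct e} : forall e', prf_code e = prf_code e' -> e = e'.
Proof.
  destruct e as [| | i | | f gs | f g | f]; intros [| | i' | | f' gs' | f' g' | f'] H;
    apply cantor_pair_inj in H as [Htag H]; try discriminate; subst; try reflexivity.
  - apply cantor_pair_inj in H as [Hf Hgs].
    apply prf_code_inj in Hf as ->. f_equal.
    revert gs' Hgs. induction gs as [| g gs IH]; intros [| g' gs'] Hgs; try discriminate;
      [reflexivity|].
    injection Hgs as Hgs. apply cantor_pair_inj in Hgs as [Hg Hgs].
    apply prf_code_inj in Hg as ->. f_equal. exact (IH _ Hgs).
  - apply cantor_pair_inj in H as [Hf Hg].
    now apply prf_code_inj in Hf as ->; apply prf_code_inj in Hg as ->.
  - now apply prf_code_inj in H as ->.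
Qed.

Lemma left_inverse_of_injection {A} (a0 : A) (f : A -> nat) :
  (forall x y, f x = f y -> x = y) -> exists g : nat -> A, forall x, g (f x) = x.
Proof.
  intro Hinj.
  destruct (choice (fun n x => forall y, f y = n -> x = y)) as [g Hg].
  - intro n. destruct (classic (exists y, f y = n)) as [[y Hy] | Hnone].
    + exists y. intros y' Hy'. apply Hinj. congruence.
    + exists a0. intros y Hy. exfalso. eauto.
  - exists g. intro x. now apply Hg.
Qed.

Lemma prf_enumerable : exists enum : nat -> prf, forall e, exists n, enum n = e.
Proof.
  destruct (left_inverse_of_injection PZero prf_code prf_code_inj) as [dec Hdec].
  exists dec. intro e. exists (prf_code e). apply Hdec.
Qed.

Definition hereditary (P : (nat -> bool) -> Prop) : Prop :=
  forall R R', subset R' R -> P R -> P R'.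

Definition dense (P : (nat -> bool) -> Prop) : Prop :=
  forall R, infinite R -> exists R', subset R' R /\ infinite R' /\ P R'.

Lemma dense_hereditary_forall {I} (P : I -> (nat -> bool) -> Prop) (l : list I) :
  (forall i, dense (P i)) -> (forall i, hereditary (P i)) ->
  dense (fun R => forall i, In i l -> P i R).
Proof.
  intros Hdense Hher. induction l as [| i l IH]; intros R HR.
  - exists R. repeat split; [apply subset_refl | exact HR | intros _ []].
  - destruct (IH R HR) as [R1 [HR1 [Hinf1 Hall1]]].
    destruct (Hdense i R1 Hinf1) as [R2 [HR2 [Hinf2 Hi]]].
    exists R2. repeat split; [exact (subset_trans _ _ _ HR2 HR1) | exact Hinf2 |].
    intros i' [<- | Hi']; [exact Hi | exact (Hher i' R1 R2 HR2 (Hall1 i' Hi'))].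
Qed.

Definition separates (e : prf) (a y : nat) (D : nat -> bool) : Prop :=
  forall S, subset S D -> infinite S -> eval S e [a] 1 /\ eval S e [y] 0.

Definition unseparable (e : prf) (a y : nat) (R : nat -> bool) : Prop :=
  ~ exists D, subset D R /\ infinite D /\ separates e a y D.

Definition decided (e : prf) (a a' : nat) (R : nat -> bool) : Prop :=
  unseparable e a a' R \/ unseparable e a' a R.

Lemma unseparable_hereditary e a y : hereditary (unseparable e a y).
Proof.
  intros R R' HR' Hun [D [HD [Hinf Hsep]]].
  apply Hun. exists D. exact (conj (subset_trans _ _ _ HD HR') (conj Hinf Hsep)).
Qed.

Lemma decided_hereditary e a a' : hereditary (decided e a a').
Proof.
  intros R R' HR' [Hun | Hun]; [left | right]; exact (unseparable_hereditary _ _ _ _ _ HR' Hun).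
Qed.

Lemma decided_dense e a a' : dense (decided e a a').
Proof.
  intros R HR.
  destruct (classic (exists D, subset D R /\ infinite D /\ separates e a' a D))
    as [[D [HD [Hinf Hsep]]] | Hun].
  - exists D. repeat split; [exact HD | exact Hinf |]. left.
    intros [D' [HD' [Hinf' Hsep']]].
    destruct (Hsep' D' (subset_refl D') Hinf') as [Ha _].
    destruct (Hsep D' HD' Hinf') as [_ Ha'].
    discriminate (eval_deterministic _ _ _ _ Ha _ Ha').
  - exists R. repeat split; [apply subset_refl | exact HR | now right].
Qed.

Lemma pigeonhole_exclusion {A B} (P : A -> B -> Prop) (es : list A) (cs : list B) :
  NoDup cs -> length es < length cs ->
  (forall e c c', In e es -> In c cs -> In c' cs -> P e c -> P e c' -> c = c') ->
  exists b, In b cs /\ forall e, In e es -> ~ P e b.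
Proof.
  revert cs. induction es as [| e es IH]; intros cs Hnd Hlen Huniq.
  - destruct cs as [| c cs]; [simpl in Hlen; lia |]. exists c. split; [left; reflexivity | intros _ []].
  - destruct (classic (exists c, In c cs /\ P e c)) as [[c [Hc Hec]] | Hnone].
    + destruct (in_split c cs Hc) as [l1 [l2 ->]].
      destruct (IH (l1 ++ l2)) as [b [Hb Hgood]].
      * exact (NoDup_remove_1 _ _ _ Hnd).
      * rewrite length_app in *. simpl in *. lia.
      * intros e' x x' He' Hx Hx'. apply Huniq; [right; exact He' | |];
          apply in_or_app; apply in_app_or in Hx, Hx'; simpl; tauto.
      * assert (Hbc : b <> c).
        { intros ->. exact (NoDup_remove_2 _ _ _ Hnd Hb). }
        assert (Hb' : In b (l1 ++ c :: l2)) by (apply in_or_app; apply in_app_or in Hb; simpl; tauto).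
        exists b. split; [exact Hb' |]. intros e' [<- | He'] Heb; [| exact (Hgood e' He' Heb)].
        exact (Hbc (Huniq e b c (or_introl eq_refl) Hb' Hc Heb Hec)).
    + destruct (IH cs Hnd) as [b [Hb Hgood]]; [simpl in Hlen; lia | |].
      * intros e' c c' He'. apply Huniq. right. exact He'.
      * exists b. split; [exact Hb |]. intros e' [<- | He'] Heb; [| exact (Hgood e' He' Heb)].
        exact (Hnone (ex_intro _ b (conj Hb Heb))).
Qed.

Lemma tournament_winner (es : list prf) (cs : list nat) R :
  NoDup cs -> length es < length cs ->
  (forall e a a', In e es -> In a cs -> In a' cs -> decided e a a' R) ->
  exists b, In b cs /\
    forall e, In e es -> exists y, In y cs /\ y <> b /\ unseparable e b y R.
Proof.
  intros Hnd Hlen Hdec.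
  set (beats_nobody e c := ~ exists y, In y cs /\ y <> c /\ unseparable e c y R).
  destruct (pigeonhole_exclusion beats_nobody es cs Hnd Hlen) as [b [Hb Hgood]].
  - intros e c c' He Hc Hc' Hsink Hsink'. apply NNPP. intro Hcc'.
    destruct (Hdec e c c' He Hc Hc') as [Hun | Hun].
    + exact (Hsink (ex_intro _ c' (conj Hc' (conj (not_eq_sym Hcc') Hun)))).
    + exact (Hsink' (ex_intro _ c (conj Hc (conj Hcc' Hun)))).
  - exists b. split; [exact Hb |]. intros e He. exact (NNPP _ (Hgood e He)).
Qed.

Lemma in_le_list_max x l : In x l -> x <= list_max l.
Proof.
  intro Hx. assert (Hall : Forall (fun k => k <= list_max l) l) by now apply list_max_le.
  exact (proj1 (Forall_forall _ l) Hall x Hx).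
Qed.

Lemma infinite_distinct_elements R m : infinite R ->
  exists l, length l = m /\ NoDup l /\ forall x, In x l -> R x = true.
Proof.
  intro HR. induction m as [| m [l [Hlen [Hnd Hl]]]].
  - exists []. repeat split; [constructor | intros x []].
  - destruct (HR (S (list_max l))) as [x [Hx HRx]].
    exists (x :: l). repeat split.
    + simpl. congruence.
    + constructor; [| exact Hnd]. intro Hin. apply in_le_list_max in Hin. lia.
    + intros x' [<- | Hx']; [exact HRx | exact (Hl x' Hx')].
Qed.

Record stage (enum : nat -> prf) (k : nat) (R : nat -> bool) (b : nat) (R' : nat -> bool) : Prop := {
  stage_mem : R b = true;
  stage_subset : subset R' R;
  stage_above : forall n, R' n = true -> b < n;
  stage_witness : forall j, j <= k ->
    exists y, R y = true /\ R' y = false /\ y <> b /\ unseparable (enum j) b y R'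
}.

Lemma stage_exists enum k R : infinite R ->
  exists b R', infinite R' /\ stage enum k R b R'.
Proof.
  intro HR.
  destruct (infinite_distinct_elements R (S (S k)) HR) as [cs [Hlen [Hnd Hcs]]].
  set (es := map enum (seq 0 (S k))).
  destruct (dense_hereditary_forall (fun '(e, a, a') => decided e a a')
              (list_prod (list_prod es cs) cs))
    with (R := R) as [R1 [HR1 [Hinf1 Hdec]]];
    [intros [[e a] a']; apply decided_dense | intros [[e a] a']; apply decided_hereditary
    | exact HR |].
  destruct (tournament_winner es cs R1 Hnd) as [b [Hb Hwin]].
  - unfold es. rewrite length_map, length_seq. lia.
  - intros e a a' He Ha Ha'. exact (Hdec (e, a, a') (in_prod _ _ _ _ (in_prod _ _ _ _ He Ha) Ha')).
  - set (M := list_max cs).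
    exists b, (fun n => R1 n && (M <? n)). split; [| split].
    + apply infinite_andb with (M := M); [exact Hinf1 |]. intros n _ Hn. now apply Nat.ltb_lt.
    + exact (Hcs b Hb).
    + intros n Hn. apply andb_prop in Hn as [Hn _]. exact (HR1 n Hn).
    + intros n Hn. apply andb_prop in Hn as [_ Hn]. apply Nat.ltb_lt in Hn.
      pose proof (in_le_list_max b cs Hb). unfold M in Hn. lia.
    + intros j Hj. destruct (Hwin (enum j)) as [y [Hy [Hyb Hun]]].
      { unfold es. apply in_map, in_seq. lia. }
      exists y. repeat split; [exact (Hcs y Hy) | | exact Hyb |].
      * apply andb_false_intro2, Nat.ltb_ge, in_le_list_max, Hy.
      * apply (unseparable_hereditary _ _ _ R1); [| exact Hun].
        intros n Hn. now apply andb_prop in Hn as [Hn _].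
Qed.

Lemma indexed_dependent_choice {A} (P : A -> Prop) (step : nat -> A -> A -> Prop) (x0 : A) :
  P x0 -> (forall k x, P x -> exists y, P y /\ step k x y) ->
  exists f : nat -> A, f 0 = x0 /\ forall k, step k (f k) (f (S k)).
Proof.
  intros H0 Hstep.
  destruct (choice (fun kx y => P (snd kx) -> P y /\ step (fst kx) (snd kx) y)) as [g Hg].
  - intros [k x]. destruct (classic (P x)) as [Hx | Hx].
    + destruct (Hstep k x Hx) as [y Hy]. exists y. now intros _.
    + exists x. now intros.
  - set (f := fix f n := match n with 0 => x0 | S n => g (n, f n) end).
    assert (HP : forall n, P (f n)).
    { induction n as [| n IH]; [exact H0 | exact (proj1 (Hg (n, f n) IH))]. }
    exists f. split; [reflexivity |]. intro k. exact (proj2 (Hg (k, f k) (HP k))).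
Qed.

Section Construction.

Variable enum : nat -> prf.
Hypothesis enum_surj : forall e, exists n, enum n = e.
Variable X : nat -> bool.
Variable b : nat -> nat.
Variable R : nat -> nat -> bool.
Hypothesis R_start : R 0 = X.
Hypothesis R_stage : forall k, stage enum k (R k) (b k) (R (S k)).

Lemma R_antitone i j : i <= j -> subset (R j) (R i).
Proof.
  induction 1 as [| j _ IH]; [apply subset_refl |].
  exact (subset_trans _ _ _ (stage_subset _ _ _ _ _ (R_stage j)) IH).
Qed.

Lemma b_in_R k : R k (b k) = true.
Proof. exact (stage_mem _ _ _ _ _ (R_stage k)). Qed.

Lemma R_above_b k n : R (S k) n = true -> b k < n.
Proof. exact (stage_above _ _ _ _ _ (R_stage k) n). Qed.

Lemma b_increasing i j : i < j -> b i < b j.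
Proof. intro Hij. exact (R_above_b i _ (R_antitone (S i) j Hij _ (b_in_R j))). Qed.

Lemma b_le_iff i j : b i <= b j <-> i <= j.
Proof.
  split; intro H.
  - destruct (le_lt_dec i j) as [| Hji]; [assumption |]. pose proof (b_increasing _ _ Hji). lia.
  - destruct (Nat.eq_dec i j) as [-> | Hij]; [lia |]. apply Nat.lt_le_incl, b_increasing. lia.
Qed.

Lemma index_le_b k : k <= b k.
Proof. induction k as [| k IH]; [lia |]. pose proof (b_increasing k (S k)). lia. Qed.

Definition B (n : nat) : bool := existsb (fun k => b k =? n) (seq 0 (S n)).

Lemma B_spec n : B n = true <-> exists k, b k = n.
Proof.
  unfold B. rewrite existsb_exists. split.
  - intros [k [_ Hk]]. exists k. now apply Nat.eqb_eq.
  - intros [k Hk]. exists k. split; [| now apply Nat.eqb_eq].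
    apply in_seq. pose proof (index_le_b k). lia.
Qed.

Lemma B_subset_X : subset B X.
Proof.
  intros n Hn. apply B_spec in Hn as [k <-]. rewrite <- R_start.
  exact (R_antitone 0 k (Nat.le_0_l k) _ (b_in_R k)).
Qed.

Lemma B_infinite : infinite B.
Proof. intro n. exists (b n). split; [apply index_le_b | apply B_spec; eauto]. Qed.

Lemma B_above_in_R k n : B n = true -> b k < n -> R (S k) n = true.
Proof.
  intros Hn Hkn. apply B_spec in Hn as [i <-].
  assert (Hki : S k <= i) by (apply Nat.nle_gt; rewrite <- b_le_iff; lia).
  exact (R_antitone _ _ Hki _ (b_in_R i)).
Qed.

Lemma discarded_not_in_B k y :
  R k y = true -> R (S k) y = false -> y <> b k -> B y = false.
Proof.
  intros Hy Hy' Hyb. destruct (B y) eqn:HB; [exfalso | reflexivity].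
  apply B_spec in HB as [i <-].
  destruct (lt_eq_lt_dec i k) as [[Hik | ->] | Hki]; [| exact (Hyb eq_refl) |].
  - destruct k as [| k]; [lia |].
    pose proof (R_above_b k _ Hy). pose proof (proj2 (b_le_iff i k) ltac:(lia)). lia.
  - rewrite (R_antitone _ _ Hki _ (b_in_R i)) in Hy'. discriminate.
Qed.

Theorem B_not_uniformly_computed C D :
  subset C B -> infinite C -> subset D B -> infinite D ->
  ~ (exists e : prf, forall S : nat -> bool,
        subset S D -> infinite S -> functional_computes e S C).
Proof.
  intros HC HCinf HD HDinf [e He].
  destruct (enum_surj e) as [j <-].
  destruct (HCinf (b j)) as [c [Hjc HCc]].
  destruct (proj1 (B_spec c) (HC c HCc)) as [k <-].
  destruct (stage_witness _ _ _ _ _ (R_stage k) j (proj1 (b_le_iff j k) Hjc))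
    as [y [Hy [Hy' [Hyb Hun]]]].
  assert (HCy : C y = false).
  { destruct (C y) eqn:HCy; [| reflexivity].
    rewrite <- (discarded_not_in_B k y Hy Hy' Hyb). symmetry. exact (HC y HCy). }
  apply Hun. exists (fun n => D n && R (S k) n). split; [| split].
  - intros n Hn. now apply andb_prop in Hn as [_ Hn].
  - apply infinite_andb with (M := b k); [exact HDinf |].
    intros n Hn. apply B_above_in_R, HD, Hn.
  - intros S HS HSinf.
    assert (HSD : subset S D) by (intros n Hn; exact (proj1 (andb_prop _ _ (HS n Hn)))).
    pose proof (He S HSD HSinf) as Hcomp.
    split; [specialize (Hcomp (b k)); rewrite HCc in Hcomp | specialize (Hcomp y); rewrite HCy in Hcomp];
      exact Hcomp.
Qed.

End Construction.

Theorem proposition3p8 :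
  forall X : nat -> bool, infinite X ->
  exists B : nat -> bool, subset B X /\ infinite B /\
    forall C D : nat -> bool,
      subset C B -> infinite C -> subset D B -> infinite D ->
      ~ (exists e : prf, forall S : nat -> bool,
            subset S D -> infinite S -> functional_computes e S C).
Proof.
  intros X HX.
  destruct prf_enumerable as [enum Henum].
  destruct (indexed_dependent_choice (fun x => infinite (snd x))
              (fun k x x' => stage enum k (snd x) (fst x') (snd x')) (0, X) HX)
    as [f [Hf0 Hf]].
  { intros k [b R] HR. destruct (stage_exists enum k R HR) as [b' [R' [HR' Hstage]]].
    now exists (b', R'). }
  (* [f k] is the pair (b_(k-1), R_k); the first component of [f 0] is a dummy. *)
  set (b k := fst (f (S k))). set (R k := snd (f k)).
  assert (HR0 : R 0 = X) by (unfold R; now rewrite Hf0).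
  exists (B b).
  split; [| split].
  - exact (B_subset_X enum X b R HR0 Hf).
  - exact (B_infinite enum b R Hf).
  - exact (B_not_uniformly_computed enum Henum b R Hf).
Qed.
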